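(* Assume (H), let $\mu_0$ be a probability measure on $\mathbb R^d$ with bounded support and $\eta\sim\mu_0$, $K:=\sup_\omega\|\eta(\omega)\|_2<\infty$. Then for every $t\in(0,T)$ and all $x,y\in\mathbb R^d$, $$\langle x-y,\,b^{\mu_0}_t(x)-b^{\mu_0}_t(y)\rangle\le\frac{\sigma_t'}{\sigma_t}\,\|x-y\|_2^2\Big[1-\frac{\beta_tK^2}{\sigma_t^2}\Big].$$
   Context: Fix $d\in\mathbb N$ and $T\in(0,\infty]$. Assumption (H): $\sigma:[0,T)\to(0,\infty)$ is continuous, strictly decreasing and differentiable with derivative $\sigma'_t$ bounded on $[0,t_0]$ for every $t_0<T$, $\sigma_0=1$, $\lim_{t\uparrow T}\sigma_t=0$; and $\beta_t:=1-\sigma_t$. $\Gamma_t(x,y):=\|x-\beta_ty\|_2^2/(2\sigma_t^2)$, $\mathcal D^{\mu_0}_t(x):=\mathbb E[\eta e^{-\Gamma_t(x,\eta)}]/\mathbb E[e^{-\Gamma_t(x,\eta)}]$ (expectation over $\eta\sim\mu_0$), and $b^{\mu_0}_t(x):=\frac{\sigma_t'}{\sigma_t}\big(x-\mathcal D^{\mu_0}_t(x)\big)$. *)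

From HB Require Import structures.
From mathcomp Require Import all_boot all_order all_algebra.
From mathcomp Require Import all_classical all_reals all_analysis.
Set Implicit Arguments. Unset Strict Implicit. Unset Printing Implicit Defensive.
Import Order.TTheory GRing.Theory Num.Theory.
Import numFieldNormedType.Exports.
Local Open Scope classical_set_scope.
Local Open Scope ring_scope.

Section Defs.
Context {R : realType} {d : nat}.

Definition dotv (u v : 'rV[R]_d) : R := \sum_(i < d) u 0 i * v 0 i.
Definition norm2sq (u : 'rV[R]_d) : R := dotv u u.
Definition norm2 (u : 'rV[R]_d) : R := Num.sqrt (norm2sq u).

Definition dom0T (T : \bar R) : set R := [set t | 0 <= t /\ (t%:E < T)%E].

(* Assumption (H); sigma' is the derivative of sigma on [0,T)
   (one-sided at 0, where the difference quotient is taken within [0,T)). *)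
Definition lim_at_T (T : \bar R) (sigma : R -> R) : Prop :=
  match T with
  | EFin r => sigma t @[t --> r^'-] --> 0
  | +oo%E => sigma t @[t --> +oo] --> 0
  | -oo%E => False
  end.

Definition assumptionH (T : \bar R) (sigma sigma' : R -> R) : Prop :=
  (0 < T)%E /\
      {within dom0T T, continuous sigma} /\
      (forall t, dom0T T t -> 0 < sigma t) /\
      (forall s t, dom0T T s -> dom0T T t -> s < t -> sigma t < sigma s) /\
      (forall t, dom0T T t ->
         (fun h => h^-1 * (sigma (t + h) - sigma t))
           @ within [set h | dom0T T (t + h)] ((0:R)^') --> sigma' t) /\
      (forall t0, dom0T T t0 -> exists M : R,
         forall t, 0 <= t <= t0 -> `|sigma' t| <= M) /\
      sigma 0 = 1 /\
      lim_at_T T sigma.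

Definition beta (sigma : R -> R) (t : R) : R := 1 - sigma t.

Definition Gamma (sigma : R -> R) (t : R) (x y : 'rV[R]_d) : R :=
  norm2sq (x - beta sigma t *: y) / (2 * sigma t ^+ 2).

(* D_t^{mu0}(x), with expectations over eta ~ mu0 written as integrals over
   the underlying probability space (componentwise). *)
Definition Dmu {d0 : measure_display} {Omega : measurableType d0}
  (P : probability Omega R) (eta : Omega -> 'rV[R]_d)
  (sigma : R -> R) (t : R) (x : 'rV[R]_d) : 'rV[R]_d :=
  \row_i (Rintegral P setT (fun w => eta w 0 i * expR (- Gamma sigma t x (eta w)))
          / Rintegral P setT (fun w => expR (- Gamma sigma t x (eta w)))).

Definition bmu {d0 : measure_display} {Omega : measurableType d0}
  (P : probability Omega R) (eta : Omega -> 'rV[R]_d)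
  (sigma sigma' : R -> R) (t : R) (x : 'rV[R]_d) : 'rV[R]_d :=
  (sigma' t / sigma t) *: (x - Dmu P eta sigma t x).

End Defs.

(* With v = x - y, the inner product <v, D(x) - D(y)> is the difference of the
   means of X = <v, eta> under two Gibbs weights, and completing the square in
   Gamma shows that the weight at x is, up to a constant factor, the weight at y
   exponentially tilted by a X with a = beta_t / sigma_t^2.  The mean of X under
   the weight tilted by a has derivative the tilted variance of X, which is at
   most M^2 = (K |v|)^2, so the difference of means is at most a M^2.  Instead of
   differentiating under the integral, a one-step bound with an error factor
   exp(2 h M) is telescoped over n steps of size a/n and n is sent to infinity.
   Finally sigma'_t <= 0, so multiplying by sigma'_t / sigma_t reverses the
   inequality. *)

From HB Require Import structures.
From mathcomp Require Import all_boot all_order all_algebra.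
From mathcomp Require Import all_classical all_reals all_analysis.
From mathcomp Require Import ring lra.
Import Order.TTheory GRing.Theory Num.Theory.
Import numFieldNormedType.Exports.
Set Implicit Arguments. Unset Strict Implicit. Unset Printing Implicit Defensive.
Local Open Scope classical_set_scope.
Local Open Scope ring_scope.

Section InnerProduct.
Context {R : realType} {d : nat}.
Implicit Types u v w : 'rV[R]_d.

Lemma dotvC u v : dotv u v = dotv v u.
Proof. by apply: eq_bigr => i _; rewrite mulrC. Qed.

Lemma dotvDl u v w : dotv (u + v) w = dotv u w + dotv v w.
Proof. by rewrite /dotv -big_split; apply: eq_bigr => i _; rewrite !mxE mulrDl. Qed.

Lemma dotvZl a u v : dotv (a *: u) v = a * dotv u v.
Proof. by rewrite /dotv mulr_sumr; apply: eq_bigr => i _; rewrite !mxE mulrA. Qed.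

Lemma dotvNl u v : dotv (- u) v = - dotv u v.
Proof. by rewrite -scaleN1r dotvZl mulN1r. Qed.

Lemma dotvBl u v w : dotv (u - v) w = dotv u w - dotv v w.
Proof. by rewrite dotvDl dotvNl. Qed.

Lemma dotvDr u v w : dotv u (v + w) = dotv u v + dotv u w.
Proof. by rewrite dotvC dotvDl !(dotvC u). Qed.

Lemma dotvZr a u v : dotv u (a *: v) = a * dotv u v.
Proof. by rewrite dotvC dotvZl dotvC. Qed.

Lemma dotvBr u v w : dotv u (v - w) = dotv u v - dotv u w.
Proof. by rewrite dotvC dotvBl !(dotvC u). Qed.

Lemma norm2sqD u v : norm2sq (u + v) = norm2sq u + 2 * dotv u v + norm2sq v.
Proof. by rewrite /norm2sq !(dotvDl, dotvDr) (dotvC v u); ring. Qed.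

Lemma norm2sq_ge0 u : 0 <= norm2sq u.
Proof. by apply: sumr_ge0 => i _; rewrite -expr2 sqr_ge0. Qed.

Lemma norm2_ge0 u : 0 <= norm2 u.
Proof. exact: sqrtr_ge0. Qed.

Lemma sqr_norm2 u : norm2 u ^+ 2 = norm2sq u.
Proof. by rewrite sqr_sqrtr // norm2sq_ge0. Qed.

Lemma norm_coord_le_norm2 u i : `|u 0 i| <= norm2 u.
Proof.
rewrite -sqrtr_sqr ler_sqrt ?norm2sq_ge0 // /norm2sq /dotv (bigD1 i) //= -expr2.
by rewrite lerDl sumr_ge0 // => j _; rewrite -expr2 sqr_ge0.
Qed.

Lemma sqr_dotv_le u v : dotv u v ^+ 2 <= norm2sq u * norm2sq v.
Proof.
set A := norm2sq u; set B := norm2sq v; set C := dotv u v.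
have : 0 <= norm2sq (B *: u - C *: v) by exact: norm2sq_ge0.
rewrite /norm2sq !(dotvBl, dotvBr, dotvZl, dotvZr) (dotvC v u) -/C.
rewrite -[dotv u u]/A -[dotv v v]/B.
have [B_gt0|] := ltrP 0 B.
  have -> : B * (B * A - C * C) - C * (B * C - C * B) = B * (A * B - C ^+ 2) by ring.
  by rewrite pmulr_rge0 // subr_ge0.
rewrite le_eqVlt ltNge norm2sq_ge0 orbF => /eqP B0 _.
have v0 i : v 0 i = 0.
  have : v 0 i * v 0 i = 0.
    by move: i isT; apply/psumr_eq0P => // i _; rewrite -expr2 sqr_ge0.
  by move/eqP; rewrite mulf_eq0 orbb => /eqP.
by rewrite /C /dotv big1 ?expr0n ?B0 ?mulr0 // => i _; rewrite v0 mulr0.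
Qed.

Lemma norm_dotv_le u v : `|dotv u v| <= norm2 u * norm2 v.
Proof.
rewrite -ler_sqr ?nnegrE ?mulr_ge0 ?norm2_ge0 //.
by rewrite real_normK ?num_real // exprMn !sqr_norm2 sqr_dotv_le.
Qed.
End InnerProduct.

Lemma deriv_le0_of_decreasing (R : realType) (T : \bar R) (f : R -> R) (l t : R) :
  0 < t -> (t%:E < T)%E ->
  (forall r s, dom0T T r -> dom0T T s -> r < s -> f s < f r) ->
  (fun h => h^-1 * (f (t + h) - f t))
     @ within [set h | dom0T T (t + h)] ((0:R)^') --> l ->
  l <= 0.
Proof.
move=> t_gt0 tT f_decr f'l.
have dom_shift h : - t <= h -> h <= 0 -> dom0T T (t + h).
  move=> th h_le0; split; first by rewrite -lerBlDl sub0r.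
  by apply: le_lt_trans tT; rewrite lee_fin gerDl.
have left_sub : 0^'- `=>` within [set h | dom0T T (t + h)] ((0:R)^').
  move=> P HP.
  have {}HP : \forall h \near (0:R), h != 0 -> dom0T T (t + h) -> P h := HP.
  suff : \forall h \near (0:R), h < 0 -> P h by [].
  near=> h => h_lt0.
  apply: (near HP h) => //; first exact: ltr0_neq0.
  apply: dom_shift (ltW h_lt0); rewrite lerNl ltW //.
  by near: h; apply: Nlt_nbhsl; rewrite oppr0.
apply: (ler_cvg_to (cvg_trans (cvg_app _ left_sub) f'l) (cvg_cst 0)).
near=> h.
have h_lt0 : h < 0 by near: h; exact: nbhs_left_lt.
have th : - t <= h by near: h; apply: nbhs_left_ge; rewrite oppr_lt0.
rewrite nmulr_rle0 ?invr_lt0 // subr_ge0 ltW // f_decr ?gtrDl //.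
  exact: dom_shift (ltW h_lt0).
by split; [exact: ltW|].
Unshelve. all: by end_near.
Qed.

Lemma ler_of_mul_expR_harmonic (R : realType) (x y r : R) :
  (forall n, x <= y * expR (r / n.+1%:R)) -> x <= y.
Proof.
move=> le_xy.
have : y * expR (r * harmonic n) @[n --> \oo] --> y * expR (r * 0).
  apply: cvgM; first exact: cvg_cst.
  apply: continuous_cvg; first exact: continuous_expR.
  by apply: cvgM; [exact: cvg_cst | exact: cvg_harmonic].
rewrite mulr0 expR0 mulr1 => cvg_y.
apply: (ler_cvg_to (cvg_cst x) cvg_y); exact: nearW.
Qed.

Lemma mulr_expR_le (R : realType) (h L z : R) : 0 <= h -> `|z| <= L ->
  z * expR (h * z) <= z + h * expR (h * L) * z ^+ 2.
Proof.
move=> h0 zL.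
have hz_le : h * z <= h * L by rewrite ler_wpM2l // (le_trans (ler_norm z)).
have eL : expR (h * z) <= expR (h * L) by rewrite ler_expR.
have hz2 : 0 <= h * z ^+ 2 by rewrite mulr_ge0 ?sqr_ge0.
have [z_ge0|z_lt0] := lerP 0 z.
  (* [1 - u <= expR (- u)] rearranges to [expR u <= 1 + u expR u] *)
  have : expR (h * z) * (1 - h * z) <= 1.
    by rewrite -ler_pdivlMl ?expR_gt0 // mulr1 -expRN expR_ge1Dx.
  have : h * z ^+ 2 * expR (h * z) <= h * z ^+ 2 * expR (h * L) by rewrite ler_wpM2l.
  nra.
have L_ge0 : 0 <= L by exact: le_trans zL.
have eL1 : 1 <= expR (h * L) by rewrite -expR0 ler_expR mulr_ge0.
have := expR_ge1Dx (h * z).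
have : h * z ^+ 2 <= h * expR (h * L) * z ^+ 2.
  by rewrite -mulrA ler_wpM2l // ler_peMl // sqr_ge0.
nra.
Qed.

Section BoundedMeasurable.
Context {R : realType} {d : measure_display} {Omega : measurableType d}.
Implicit Types f g : Omega -> R.

Definition bounded_measurable f : Prop :=
  measurable_fun setT f /\ exists M, forall o, `|f o| <= M.

Lemma bounded_measurable_cst c : bounded_measurable (fun=> c).
Proof. by split; [exact: measurable_cst | exists `|c|]. Qed.

Lemma bounded_measurableD f g : bounded_measurable f -> bounded_measurable g ->
  bounded_measurable (fun o => f o + g o).
Proof.
move=> [mf [M fM]] [mg [N gN]]; split; first exact: measurable_realfun.measurable_funD.
by exists (M + N) => o; rewrite (le_trans (ler_normD _ _)) ?lerD.
Qed.

Lemma bounded_measurableM f g : bounded_measurable f -> bounded_measurable g ->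
  bounded_measurable (fun o => f o * g o).
Proof.
move=> [mf [M fM]] [mg [N gN]]; split; first exact: measurable_realfun.measurable_funM.
by exists (M * N) => o; rewrite normrM ler_pM.
Qed.

Lemma bounded_measurableN f : bounded_measurable f ->
  bounded_measurable (fun o => - f o).
Proof.
move=> bf; have := bounded_measurableM (bounded_measurable_cst (-1)) bf.
by under eq_fun do rewrite mulN1r.
Qed.

Lemma bounded_measurable_expR f : bounded_measurable f ->
  bounded_measurable (fun o => expR (f o)).
Proof.
move=> [mf [M fM]]; split; first exact: measurableT_comp.
exists (expR M) => o; rewrite ger0_norm ?expR_ge0 // ler_expR.
exact: le_trans (ler_norm _) (fM o).
Qed.

Lemma bounded_measurable_sum (I : Type) (r : seq I) (F : I -> Omega -> R) :
  (forall i, bounded_measurable (F i)) ->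
  bounded_measurable (fun o => \sum_(i <- r) F i o).
Proof.
move=> bF; elim: r => [|i r IH].
  by under eq_fun do rewrite big_nil; exact: bounded_measurable_cst.
by under eq_fun do rewrite big_cons; exact: bounded_measurableD.
Qed.

End BoundedMeasurable.

Ltac bounded_measurable_tac :=
  repeat first [ assumption | apply: bounded_measurable_cst
    | apply: bounded_measurableD | apply: bounded_measurableM
    | apply: bounded_measurableN | apply: bounded_measurable_expR ].

Section WeightedMean.
Context {R : realType} {d : measure_display} {Omega : measurableType d}
  (P : probability Omega R).
Local Notation expect := (Rintegral P setT).
Implicit Types (f g w X : Omega -> R).

Lemma bounded_measurable_integrable f :
  bounded_measurable f -> P.-integrable setT (EFin \o f).
Proof.
case=> mf [M fM]; apply: measurable_bounded_integrable => //.
  by rewrite (le_lt_trans (probability_le1 P measurableT)) ?ltry.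
exists M; split; first exact: num_real.
by move=> N MN o _; exact: le_trans (fM o) (ltW MN).
Qed.

Lemma expectD f g : bounded_measurable f -> bounded_measurable g ->
  expect (fun o => f o + g o) = expect f + expect g.
Proof. by move=> bf bg; rewrite RintegralD // bounded_measurable_integrable. Qed.

Lemma expectZl k f : bounded_measurable f ->
  expect (fun o => k * f o) = k * expect f.
Proof. by move=> bf; rewrite RintegralZl // bounded_measurable_integrable. Qed.

Lemma expectB f g : bounded_measurable f -> bounded_measurable g ->
  expect (fun o => f o - g o) = expect f - expect g.
Proof.
move=> bf bg; rewrite expectD //; last exact: bounded_measurableN.
by under eq_fun do rewrite -mulN1r; rewrite expectZl // mulN1r.
Qed.

Lemma expect_cst c : expect (fun=> c) = c.
Proof.
have PT : (P : {measure set Omega -> \bar R}) setT = 1%E := probability_setT P.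
by rewrite Rintegral_cst // PT mulr1.
Qed.

Lemma ler_expect f g : bounded_measurable f -> bounded_measurable g ->
  (forall o, f o <= g o) -> expect f <= expect g.
Proof.
by move=> bf bg fg; apply: le_Rintegral => //; exact: bounded_measurable_integrable.
Qed.

Lemma expect_expR_gt0 f : bounded_measurable f -> 0 < expect (fun o => expR (f o)).
Proof.
move=> bf; have [_ [M fM]] := bf.
rewrite (@lt_le_trans _ _ (expR (- M))) ?expR_gt0 //.
rewrite -[X in X <= _]expect_cst; apply: ler_expect => [||o]; try bounded_measurable_tac.
by rewrite ler_expR lerNl (le_trans _ (fM o)) // -normrN ler_norm.
Qed.

Lemma expect_sum (I : Type) (r : seq I) (F : I -> Omega -> R) :
  (forall i, bounded_measurable (F i)) ->
  expect (fun o => \sum_(i <- r) F i o) = \sum_(i <- r) expect (F i).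
Proof.
move=> bF; elim: r => [|i r IH].
  by under eq_fun do rewrite big_nil; rewrite big_nil expect_cst.
under eq_fun do rewrite big_cons.
by rewrite expectD ?big_cons ?IH //; exact: bounded_measurable_sum.
Qed.

Definition wmean w X : R := expect (fun o => X o * w o) / expect w.

Definition tilt w X (a : R) : Omega -> R := fun o => w o * expR (a * X o).

Lemma tilt0 w X : tilt w X 0 = w.
Proof. by apply/funext => o; rewrite /tilt mul0r expR0 mulr1. Qed.

Lemma tiltD w X a h : tilt (tilt w X a) X h = tilt w X (a + h).
Proof. by apply/funext => o; rewrite /tilt -mulrA -expRD mulrDl. Qed.

Lemma bounded_measurable_tilt w X a : bounded_measurable w ->
  bounded_measurable X -> bounded_measurable (tilt w X a).
Proof. by move=> bw bX; rewrite /tilt; bounded_measurable_tac. Qed.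

Lemma wmeanZ (k : R) w X : k != 0 -> bounded_measurable w -> bounded_measurable X ->
  wmean (fun o => k * w o) X = wmean w X.
Proof.
move=> k0 bw bX; rewrite /wmean expectZl //.
under eq_fun do rewrite mulrCA.
rewrite expectZl; last by bounded_measurable_tac.
by rewrite invfM mulrACA divff ?mul1r.
Qed.

Lemma wmeanBr w X (c : R) : bounded_measurable w -> bounded_measurable X ->
  expect w != 0 -> wmean w (fun o => X o - c) = wmean w X - c.
Proof.
move=> bw bX Ew0; rewrite /wmean.
under eq_fun do rewrite mulrBl.
by rewrite expectB ?expectZl ?mulrBl ?mulfK //; bounded_measurable_tac.
Qed.

Section CenteredWeight.
Variables (w Y : Omega -> R).
Hypotheses (bw : bounded_measurable w) (bY : bounded_measurable Y).
Hypotheses (w_ge0 : forall o, 0 <= w o) (EwY0 : expect (fun o => w o * Y o) = 0).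

Lemma expect_le_tilt_centered h : expect w <= expect (tilt w Y h).
Proof.
have : expect (fun o => w o + h * (w o * Y o)) <= expect (tilt w Y h).
  apply: ler_expect => [||o]; rewrite /tilt; try bounded_measurable_tac.
  by rewrite -[X in X + _]mulr1 mulrCA -mulrDr ler_wpM2l // expR_ge1Dx.
by rewrite expectD ?expectZl ?EwY0 ?mulr0 ?addr0 //; bounded_measurable_tac.
Qed.

Lemma expect_mul_tilt_centered_le L h : (forall o, `|Y o| <= L) -> 0 <= h ->
  expect (fun o => Y o * tilt w Y h o)
  <= h * expR (h * L) * expect (fun o => w o * Y o ^+ 2).
Proof.
move=> YL h0.
have : expect (fun o => Y o * tilt w Y h o)
    <= expect (fun o => w o * Y o + h * expR (h * L) * (w o * Y o ^+ 2)).
  apply: ler_expect => [||o]; rewrite /tilt; try bounded_measurable_tac.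
  rewrite mulrCA [_ * (w o * _)]mulrCA -mulrDr ler_wpM2l //.
  exact: mulr_expR_le.
by rewrite expectD ?expectZl ?EwY0 ?add0r //; bounded_measurable_tac.
Qed.

End CenteredWeight.

Section TiltStep.
Variables (w X : Omega -> R) (M : R).
Hypotheses (bw : bounded_measurable w) (bX : bounded_measurable X).
Hypotheses (w_ge0 : forall o, 0 <= w o) (Ew_gt0 : 0 < expect w).
Hypothesis XM : forall o, `|X o| <= M.

Lemma norm_wmean_le : `|wmean w X| <= M.
Proof.
have [XlM XgM] : (forall o, - M * w o <= X o * w o) /\ (forall o, X o * w o <= M * w o).
  by split=> o; rewrite ler_wpM2r //; have := XM o; rewrite ler_norml => /andP[].
rewrite ler_norml /wmean ler_pdivlMr // ler_pdivrMr //.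
by rewrite -!expectZl // !ler_expect //; bounded_measurable_tac.
Qed.

Lemma expect_mul_centered : expect (fun o => w o * (X o - wmean w X)) = 0.
Proof.
under eq_fun do rewrite mulrBr mulrC [w _ * _]mulrC.
by rewrite expectB ?expectZl ?divfK ?subrr ?gt_eqF //; bounded_measurable_tac.
Qed.

Lemma expect_centered_sqr_le :
  expect (fun o => w o * (X o - wmean w X) ^+ 2) <= M ^+ 2 * expect w.
Proof.
set c := wmean w X.
have -> : expect (fun o => w o * (X o - c) ^+ 2) = expect (fun o => w o * X o ^+ 2)
    - c * expect (fun o => w o * (X o - c)) - c * expect (fun o => X o * w o).
  rewrite -!expectZl -?expectB; try bounded_measurable_tac.
  by congr expect; apply/funext => o; ring.
have cXw : expect (fun o => X o * w o) = c * expect w by rewrite /c /wmean divfK ?gt_eqF.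
have EwX2 : expect (fun o => w o * X o ^+ 2) <= M ^+ 2 * expect w.
  rewrite -expectZl //; apply: ler_expect => [||o]; try bounded_measurable_tac.
  rewrite mulrC; apply: ler_wpM2r => //.
  by rewrite -real_normK ?num_real // !expr2 ler_pM.
rewrite expect_mul_centered mulr0 subr0 cXw mulrA -expr2 (le_trans _ EwX2) //.
by rewrite gerBl mulr_ge0 ?sqr_ge0 ?ltW.
Qed.

Lemma expect_tilt_gt0 a : 0 <= a -> 0 < expect (tilt w X a).
Proof.
move=> a0; rewrite (@lt_le_trans _ _ (expR (- (a * M)) * expect w)) ?mulr_gt0 ?expR_gt0 //.
rewrite -expectZl //; apply: ler_expect => [||o]; rewrite /tilt; try bounded_measurable_tac.
rewrite mulrC ler_wpM2l // ler_expR -mulrN ler_wpM2l //.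
by have := XM o; rewrite ler_norml => /andP[].
Qed.

Lemma wmean_tilt_step h : 0 <= h ->
  wmean (tilt w X h) X - wmean w X <= h * M ^+ 2 * expR (h * (2 * M)).
Proof.
move=> h0; set c := wmean w X; pose Y o := X o - c.
have bY : bounded_measurable Y by rewrite /Y; bounded_measurable_tac.
have YL o : `|Y o| <= 2 * M.
  by have := XM o; have := norm_wmean_le; have := ler_normB (X o) c; rewrite /Y; lra.
have EwY : expect (fun o => w o * Y o) = 0 := expect_mul_centered.
have EtiltY := expect_le_tilt_centered bw bY w_ge0 EwY h.
have EtiltY_gt0 : 0 < expect (tilt w Y h) := lt_le_trans Ew_gt0 EtiltY.
have btX := bounded_measurable_tilt h bw bX.
have btY := bounded_measurable_tilt h bw bY.
have tiltXY : tilt w X h = (fun o => expR (h * c) * tilt w Y h o).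
  by apply/funext => o; rewrite /tilt /Y mulrCA -expRD; congr (_ * expR _); ring.
rewrite -wmeanBr ?gt_eqF ?expect_tilt_gt0 //.
rewrite tiltXY wmeanZ ?gt_eqF ?expR_gt0 // /wmean.
rewrite ler_pdivrMr // (le_trans (expect_mul_tilt_centered_le bw bY w_ge0 EwY YL h0)) //.
have -> : h * M ^+ 2 * expR (h * (2 * M)) * expect (tilt w Y h)
    = h * expR (h * (2 * M)) * (M ^+ 2 * expect (tilt w Y h)) by ring.
rewrite ler_wpM2l ?mulr_ge0 ?expR_ge0 //.
exact: le_trans expect_centered_sqr_le (ler_wpM2l (sqr_ge0 _) EtiltY).
Qed.

End TiltStep.

Section TiltedMean.
Variables (w X : Omega -> R) (M : R).
Hypotheses (bw : bounded_measurable w) (bX : bounded_measurable X).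
Hypotheses (w_ge0 : forall o, 0 <= w o) (Ew_gt0 : 0 < expect w).
Hypothesis XM : forall o, `|X o| <= M.

Lemma wmean_tilt_telescope a n : 0 <= a ->
  wmean (tilt w X a) X - wmean w X <= a * M ^+ 2 * expR (a / n.+1%:R * (2 * M)).
Proof.
move=> a0; set h := a / n.+1%:R.
have h0 : 0 <= h by rewrite divr_ge0.
suff steps k : wmean (tilt w X (k%:R * h)) X - wmean w X
    <= k%:R * h * M ^+ 2 * expR (h * (2 * M)).
  by have := steps n.+1; rewrite /h mulrC divfK ?pnatr_eq0.
elim: k => [|k IH]; first by rewrite mul0r tilt0 subrr !mul0r.
have kh0 : 0 <= k%:R * h by rewrite mulr_ge0.
have := wmean_tilt_step (bounded_measurable_tilt (k%:R * h) bw bX) bX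
  (fun o => mulr_ge0 (w_ge0 o) (expR_ge0 _)) (expect_tilt_gt0 bw bX w_ge0 Ew_gt0 XM kh0) XM h0.
have -> : k.+1%:R * h = k%:R * h + h by rewrite mulrSr mulrDl mul1r.
rewrite tiltD; lra.
Qed.

Lemma wmean_tilt_sub_le a : 0 <= a ->
  wmean (tilt w X a) X - wmean w X <= a * M ^+ 2.
Proof.
move=> a0; apply: (@ler_of_mul_expR_harmonic _ _ _ (a * (2 * M))) => n.
by rewrite [a * (2 * M) / _]mulrAC wmean_tilt_telescope.
Qed.

End TiltedMean.

End WeightedMean.

Section Denoiser.
Context {R : realType} {d : nat} {d0 : measure_display} {Omega : measurableType d0}.
Variables (P : probability Omega R) (eta : Omega -> 'rV[R]_d).
Variables (sigma : R -> R) (t : R).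
Hypothesis b_eta : forall i, bounded_measurable (fun o => eta o 0 i).
Implicit Types x y z e v : 'rV[R]_d.

Definition Gibbs_weight (z : 'rV[R]_d) (o : Omega) : R :=
  expR (- Gamma sigma t z (eta o)).

Lemma bounded_measurable_dotv v : bounded_measurable (fun o => dotv v (eta o)).
Proof.
by apply: bounded_measurable_sum => i; apply: bounded_measurableM => //;
  exact: bounded_measurable_cst.
Qed.

Lemma bounded_measurable_Gamma z :
  bounded_measurable (fun o => Gamma sigma t z (eta o)).
Proof.
rewrite /Gamma /norm2sq /dotv.
under eq_fun do under eq_bigr do rewrite !mxE.
apply: bounded_measurableM; last exact: bounded_measurable_cst.
by apply: bounded_measurable_sum => i; bounded_measurable_tac.
Qed.

Lemma bounded_measurable_Gibbs_weight z : bounded_measurable (Gibbs_weight z).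
Proof.
by apply/bounded_measurable_expR/bounded_measurableN; exact: bounded_measurable_Gamma.
Qed.

Lemma dotv_Dmu v z :
  dotv v (Dmu P eta sigma t z) = wmean P (Gibbs_weight z) (fun o => dotv v (eta o)).
Proof.
have bw := bounded_measurable_Gibbs_weight z.
rewrite /dotv /wmean; under [in RHS]eq_fun do rewrite mulr_suml.
rewrite expect_sum => [|i]; last by bounded_measurable_tac.
rewrite mulr_suml; apply: eq_bigr => i _.
rewrite mxE mulrA -expectZl; last by bounded_measurable_tac.
by under eq_fun do rewrite mulrA.
Qed.

Lemma Gamma_shift x y e : Gamma sigma t x e = Gamma sigma t y e
  + (2 * dotv (x - y) y + norm2sq (x - y)) / (2 * sigma t ^+ 2)
  - beta sigma t / sigma t ^+ 2 * dotv (x - y) e.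
Proof.
rewrite /Gamma -[x in x - _](subrK y) -addrA [(x - y) + _]addrC.
rewrite [norm2sq (_ + (x - y))]norm2sqD (dotvBl y) dotvZl (dotvC y) (dotvC e) invfM.
(* Abstracting [sigma t ^- 2] keeps [field] from requiring [sigma t != 0]. *)
set k := (sigma t ^+ 2)^-1.
by field.
Qed.

Lemma Gibbs_weight_shift x y : Gibbs_weight x = (fun o =>
  expR (- ((2 * dotv (x - y) y + norm2sq (x - y)) / (2 * sigma t ^+ 2)))
  * tilt (Gibbs_weight y) (fun o => dotv (x - y) (eta o)) (beta sigma t / sigma t ^+ 2) o).
Proof.
by apply/funext => o; rewrite /Gibbs_weight /tilt (Gamma_shift x y) -!expRD; congr expR; ring.
Qed.

Lemma dotv_Dmu_sub x y :
  dotv (x - y) (Dmu P eta sigma t x) - dotv (x - y) (Dmu P eta sigma t y)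
  = wmean P (tilt (Gibbs_weight y) (fun o => dotv (x - y) (eta o))
                  (beta sigma t / sigma t ^+ 2)) (fun o => dotv (x - y) (eta o))
    - wmean P (Gibbs_weight y) (fun o => dotv (x - y) (eta o)).
Proof.
have bX := bounded_measurable_dotv (x - y).
rewrite !dotv_Dmu (Gibbs_weight_shift x y) wmeanZ ?gt_eqF ?expR_gt0 //.
exact: bounded_measurable_tilt (bounded_measurable_Gibbs_weight y) bX.
Qed.

Lemma dotv_bmu_sub sigma' x y :
  dotv (x - y) (bmu P eta sigma sigma' t x - bmu P eta sigma sigma' t y)
  = sigma' t / sigma t * (norm2sq (x - y)
      - (dotv (x - y) (Dmu P eta sigma t x) - dotv (x - y) (Dmu P eta sigma t y))).
Proof.
rewrite /bmu -scalerBr dotvZr.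
have -> : forall a b c e : 'rV[R]_d, (a - b) - (c - e) = (a - c) - (b - e).
  by move=> a b c e; rewrite !opprD !opprK addrACA.
by rewrite dotvBr (dotvBr _ (Dmu _ _ _ _ x)).
Qed.

End Denoiser.

Theorem lemma2p7 (R : realType) (d : nat) (T : \bar R) (sigma sigma' : R -> R)
  (HH : assumptionH T sigma sigma')
  (d0 : measure_display) (Omega : measurableType d0) (P : probability Omega R)
  (eta : Omega -> 'rV[R]_d)
  (eta_meas : forall i : 'I_d, measurable_fun setT (fun w => eta w 0 i))
  (eta_bdd : exists M : R, forall w, norm2 (eta w) <= M)
  (K : R) (HK : K = sup [set norm2 (eta w) | w in setT]) :
  forall t : R, 0 < t -> (t%:E < T)%E ->
  forall x y : 'rV[R]_d,
    dotv (x - y) (bmu P eta sigma sigma' t x - bmu P eta sigma sigma' t y)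
    <= sigma' t / sigma t * norm2sq (x - y)
       * (1 - beta sigma t * K ^+ 2 / sigma t ^+ 2).
Proof.
move=> t t_gt0 tT x y.
have [_ [_ [sigma_gt0 [sigma_decr [sigma_deriv [_ [sigma0 _]]]]]]] := HH.
have dom_t : dom0T T t by split; [exact: ltW|].
have dom_0 : dom0T T 0 by split => //; apply: le_lt_trans tT; rewrite lee_fin ltW.
have s_gt0 := sigma_gt0 t dom_t.
have a_ge0 : 0 <= beta sigma t / sigma t ^+ 2.
  by rewrite divr_ge0 ?sqr_ge0 // subr_ge0 -sigma0 ltW // sigma_decr.
have rate_le0 : sigma' t / sigma t <= 0.
  rewrite pmulr_lle0 ?invr_gt0 //.
  exact: deriv_le0_of_decreasing t_gt0 tT sigma_decr (sigma_deriv t dom_t).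
have [Me eta_Me] := eta_bdd.
have eta_K o : norm2 (eta o) <= K.
  rewrite HK; apply: ub_le_sup; last by exists o.
  by exists Me => _ [w _ <-].
have b_eta i : bounded_measurable (fun o => eta o 0 i).
  by split => //; exists Me => o; exact: le_trans (norm_coord_le_norm2 _ _) (eta_Me o).
set v := x - y; pose X o := dotv v (eta o).
have XM o : `|X o| <= norm2 v * K.
  exact: le_trans (norm_dotv_le _ _) (ler_wpM2l (norm2_ge0 v) (eta_K o)).
have Delta_le : dotv v (Dmu P eta sigma t x) - dotv v (Dmu P eta sigma t y)
    <= norm2sq v * (beta sigma t * K ^+ 2 / sigma t ^+ 2).
  have -> : norm2sq v * (beta sigma t * K ^+ 2 / sigma t ^+ 2)
      = beta sigma t / sigma t ^+ 2 * (norm2 v * K) ^+ 2.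
    by rewrite exprMn sqr_norm2; ring.
  rewrite dotv_Dmu_sub //; apply: wmean_tilt_sub_le => //.
  - exact: bounded_measurable_Gibbs_weight.
  - exact: bounded_measurable_dotv.
  - by move=> o; exact: expR_ge0.
  - by apply/expect_expR_gt0/bounded_measurableN; exact: bounded_measurable_Gamma.
rewrite dotv_bmu_sub -[_ * norm2sq _ * _]mulrA; apply: ler_wnM2l => //.
by rewrite mulrBr mulr1 lerD2l lerN2.
Qed.
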